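(* Let $m$ be odd, $q=2^m$, $R=GR(4,m)$ with Teichmüller set $\mathcal{T}$, let $A,B\in\mathcal{T}$ with $B\neq0$, and let $d\in\mathbb{F}_q$. The number of triples $(X,Y,Z)\in\mathcal{T}^3$ satisfying $$X+Y+Z=-A+2B,\qquad x^3+y^3+z^3=a^3+b^3d$$ is $3$ if $d=0$, is $0$ if $d\in M_0\cup M_1$, and is $6$ if $d\in M_3$.
   Context: $R=GR(4,m)=\mathbb{Z}_4[x]/(f(x))$ with $f$ monic of degree $m$ irreducible mod 2; $\mathcal{T}=\{0,1,\beta,\dots,\beta^{q-2}\}$ with $\beta\in R^*$ of order $q-1$; lower-case letters $x,y,z,a,b$ denote reductions mod 2 (in $\mathbb{F}_q$) of $X,Y,Z,A,B$. For $c\in\mathbb{F}_q$ let $f_c(x)=x^3+x+c$, and for $i\in\{0,1,3\}$ let $M_i=\{c\in\mathbb{F}_q^*: f_c(x)=0 \text{ has exactly } i \text{ solutions in } \mathbb{F}_q\}$. *)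

From HB Require Import structures.
From mathcomp Require Import all_boot all_order all_algebra.
Set Implicit Arguments. Unset Strict Implicit. Unset Printing Implicit Defensive.
Import Order.TTheory GRing.Theory Num.Theory.
Local Open Scope ring_scope.

Definition z4_to_f2 (c : 'Z_4) : 'F_2 := (nat_of_ord c)%:R.

Definition fc (F : fieldType) (c x : F) : F := x ^+ 3 + x + c.

Definition Mset (F : finFieldType) (i : nat) : {set F} :=
  [set c : F | (c != 0) && (#|[set x : F | fc c x == 0]| == i)].

Definition teich (R : nzRingType) (q : nat) (beta : R) : {pred R} :=
  fun X => (X == 0) || [exists i : 'I_q.-1, X == beta ^+ i].

(* Every Teichmüller element is the square of a Teichmüller element, and
   reduction mod 2 maps T bijectively onto F_q. Writing X = X'^2 etc., the
   equation X + Y + Z = -A + 2B is an identity between sums of squares in R;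
   since squares only depend on residues mod 2 (because 4 = 0), it amounts to
   x' + y' + z' = a' and x'y' + y'z' + z'x' = a'^2 + b in F_q, and applying
   Frobenius, to e1(x,y,z) = a and e2(x,y,z) = a^2 + b^2. The substitution
   (x, y, z) = (a + bu, a + bv, a + b(u + v)) then turns the system into
   u^2 + uv + v^2 = 1 and uv(u + v) = d, i.e. (u, v, u + v) are the roots of
   f_d with multiplicity. For d <> 0, f_d is separable and there are r(r - 1)
   ordered pairs when f_d has r roots; f_0 = x(x + 1)^2 gives 3 pairs. *)

From HB Require Import structures.
From mathcomp Require Import all_boot all_order all_algebra.
From mathcomp Require Import ring.
Import Order.TTheory GRing.Theory Num.Theory.
Local Open Scope ring_scope.

Set Implicit Arguments.
Unset Strict Implicit.
Unset Printing Implicit Defensive.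

Lemma z4_to_f2E (c : 'Z_4) : z4_to_f2 c = (odd c)%:R.
Proof. by apply/val_inj; rewrite /z4_to_f2 /= !(val_Fp_nat (p := 2)) // !modn2 oddb. Qed.

Lemma z4_to_f2_is_zmod_morphism : zmod_morphism z4_to_f2.
Proof. by move=> [[|[|[|[|//]]]] ?] [[|[|[|[|//]]]] ?]; apply/val_inj. Qed.

Lemma z4_to_f2_is_monoid_morphism : monoid_morphism z4_to_f2.
Proof. by split=> // - [[|[|[|[|//]]]] ?] [[|[|[|[|//]]]] ?]; apply/val_inj. Qed.

HB.instance Definition _ :=
  GRing.isZmodMorphism.Build 'Z_4 'F_2 z4_to_f2 z4_to_f2_is_zmod_morphism.
HB.instance Definition _ :=
  GRing.isMonoidMorphism.Build 'Z_4 'F_2 z4_to_f2 z4_to_f2_is_monoid_morphism.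

Lemma z4_to_f2_eq0 (c : 'Z_4) : z4_to_f2 c = 0 -> c = (c./2)%:R *+ 2.
Proof.
rewrite z4_to_f2E; case: (boolP (odd c)) => [_ /eqP|ev _]; first by rewrite oner_eq0.
by rewrite -mulr_natr -natrM muln2 -{1}(natr_Zp c) -{1}(odd_double_half c) (negbTE ev).
Qed.

Section Char2.
Variable F : fieldType.
Hypothesis F2 : 2 \in [pchar F].

(* [ring] ignores the characteristic, so identities in characteristic 2 are
   proved below as exact identities up to an explicit even term. *)
Lemma eq_mod2_pchar2 (x y z : F) : x = y + z *+ 2 -> x = y.
Proof. by move->; rewrite -mulr_natr (pcharf0 F2) mulr0 addr0. Qed.

Lemma addr_eq0_pchar2 (x y : F) : (x + y == 0) = (x == y).
Proof. by rewrite addr_eq0 (oppr_pchar2 F2). Qed.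

Lemma sqrrD_pchar2 (x y : F) : (x + y) ^+ 2 = x ^+ 2 + y ^+ 2.
Proof. by rewrite -!(pFrobenius_autE F2) rmorphD. Qed.

Lemma sqrf_eq_pchar2 (x y : F) : (x ^+ 2 == y ^+ 2) = (x == y).
Proof.
by rewrite -[LHS]addr_eq0_pchar2 -[RHS]addr_eq0_pchar2 -[in RHS]sqrf_eq0 sqrrD_pchar2.
Qed.

Lemma sqrf_eq1_pchar2 (x : F) : (x ^+ 2 == 1) = (x == 1).
Proof. by rewrite -{1}(expr1n F 2) sqrf_eq_pchar2. Qed.

End Char2.

Section RootPairs.
Variable F : finFieldType.
Hypothesis F2 : 2 \in [pchar F].

Definition root_pairs (d : F) : {set F * F} :=
  [set p | (p.1 ^+ 2 + p.1 * p.2 + p.2 ^+ 2 == 1) && (p.1 * p.2 * (p.1 + p.2) == d)].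

Definition sym_system (a b d : F) : {set F * F * F} :=
  [set s | [&& s.1.1 + s.1.2 + s.2 == a,
              s.1.1 * s.1.2 + s.1.2 * s.2 + s.2 * s.1.1 == a ^+ 2 + b ^+ 2 &
              s.1.1 ^+ 3 + s.1.2 ^+ 3 + s.2 ^+ 3 == a ^+ 3 + b ^+ 3 * d]].

Lemma affine_in_sym_system (a b d u v : F) : b != 0 ->
  ((a + b * u, a + b * v, a + b * (u + v)) \in sym_system a b d) =
  ((u, v) \in root_pairs d).
Proof.
move=> b0; rewrite !inE /=.
set x := a + b * u; set y := a + b * v; set z := a + b * (u + v).
have -> : x + y + z = a.
  by apply: (eq_mod2_pchar2 F2 (z := a + b * (u + v))); rewrite /x /y /z; ring.
have -> : x * y + y * z + z * x = a ^+ 2 + b ^+ 2 * (u ^+ 2 + u * v + v ^+ 2).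
  apply: (eq_mod2_pchar2 F2 (z := a ^+ 2 + (a * b * (u + v)) *+ 2 + b ^+ 2 * u * v)).
  by rewrite /x /y /z; ring.
have -> : x ^+ 3 + y ^+ 3 + z ^+ 3 = a ^+ 3 + b ^+ 3 * (u * v * (u + v)).
  apply: (eq_mod2_pchar2 F2 (z := a ^+ 3 + 3%:R * a ^+ 2 * b * (u + v)
    + 3%:R * a * b ^+ 2 * (u ^+ 2 + u * v + v ^+ 2)
    + b ^+ 3 * (u ^+ 3 + v ^+ 3 + u * v * (u + v)))).
  by rewrite /x /y /z; ring.
rewrite eqxx !(inj_eq (addrI _)) -{2}[b ^+ 2]mulr1.
by rewrite !(inj_eq (mulfI _)) // expf_neq0.
Qed.

Lemma card_sym_system (a b d : F) : b != 0 -> #|sym_system a b d| = #|root_pairs d|.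
Proof.
move=> b0; pose psi (p : F * F) := (a + b * p.1, a + b * p.2, a + b * (p.1 + p.2)).
have psi_inj : injective psi.
  by move=> [u v] [u' v'] [/addrI/(mulfI b0) -> /addrI/(mulfI b0) ->].
rewrite -(card_imset _ psi_inj); apply: eq_card => -[[x y] z].
apply/idP/imsetP => [xyz_sol|[[u v] uv_root ->]]; last by rewrite affine_in_sym_system.
pose u := (x - a) / b; pose v := (y - a) / b.
have Ex : x = a + b * u by rewrite mulrC divfK // addrC subrK.
have Ey : y = a + b * v by rewrite mulrC divfK // addrC subrK.
have Ez : z = a + b * (u + v).
  move: xyz_sol; rewrite inE => /and3P [/eqP sum_xyz _ _].
  have -> : z = x + y + z - x - y by ring.
  rewrite sum_xyz {1}Ex {1}Ey.
  by apply: (eq_mod2_pchar2 F2 (z := - a - b * (u + v))); ring.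
exists (u, v); last by rewrite Ex Ey Ez.
by rewrite -(affine_in_sym_system a d u v b0) -Ex -Ey -Ez.
Qed.

Lemma root_pairsE (d u v : F) :
  ((u, v) \in root_pairs d) = (u ^+ 2 + u * v + v ^+ 2 == 1) && (fc d u == 0).
Proof.
rewrite inE /=; case: eqP => //= e2.
have -> : fc d u = u * v * (u + v) + d.
  transitivity (u ^+ 3 + u * (u ^+ 2 + u * v + v ^+ 2) + d); first by rewrite e2 mulr1.
  by apply: (eq_mod2_pchar2 F2 (z := u ^+ 3)); ring.
by rewrite (addr_eq0_pchar2 F2).
Qed.

Lemma root_pairs0 : root_pairs 0 = [set (0, 1); (1, 0); (1, 1)].
Proof.
apply/setP => -[u v]; rewrite !inE /= !xpair_eqE !mulf_eq0 (addr_eq0_pchar2 F2).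
have [->|u0] := eqVneq u 0.
  by rewrite expr0n mul0r !add0r (sqrf_eq1_pchar2 F2) andbT (eq_sym 0 1) oner_eq0 /= !orbF.
have [->|v0] := eqVneq v 0.
  rewrite (mulr0 u) expr0n !addr0 (sqrf_eq1_pchar2 F2) (negbTE u0) (eq_sym 0 1).
  by rewrite oner_eq0 /= !andbT !andbF orbF.
rewrite /= andbF /=.
have [<-|uv] := eqVneq u v; last first.
  by rewrite andbF; apply/esym/negbTE; apply: contra uv => /andP [/eqP -> /eqP ->].
rewrite -expr2 (addrr_pchar2 F2) add0r.
by rewrite (sqrf_eq1_pchar2 F2) andbT andbb.
Qed.

Lemma card_root_pairs0 : #|root_pairs 0| = 3.
Proof.
rewrite root_pairs0 -setUA cardsU1 cards2 !inE !xpair_eqE eqxx oner_eq0 (eq_sym 0 1) oner_eq0.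
by [].
Qed.

Lemma card_root_pairs (d : F) : d != 0 ->
  #|root_pairs d| = (#|[set x : F | fc d x == 0%R]| * #|[set x : F | fc d x == 0%R]|.-1)%N.
Proof.
move=> d0; set roots := [set x : F | fc d x == 0].
pose diag := [set (x, x) | x in roots].
have card_diag : #|diag| = #|roots| by apply: card_imset => x y [].
have diag_sub : diag \subset setX roots roots.
  by apply/subsetP => _ /imsetP [x x_root ->]; rewrite inE /= x_root.
have -> : root_pairs d = setX roots roots :\: diag.
  apply/setP => -[u v]; rewrite root_pairsE !inE /=.
  have -> : ((u, v) \in diag) = (u == v) && (fc d u == 0).
    apply/imsetP/andP => [[x + [-> ->]]|[/eqP <- u_root]]; first by rewrite inE eqxx.
    by exists u; rewrite ?inE.
  have [u_root|] := boolP (fc d u == 0); rewrite ?andbF //= andbT.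
  have -> : fc d v = fc d u + (u + v) * (u ^+ 2 + u * v + v ^+ 2 + 1).
    apply: (eq_mod2_pchar2 F2 (z := - (u ^+ 3 + u + u ^+ 2 * v + u * v ^+ 2))).
    by rewrite /fc; ring.
  rewrite (eqP u_root) add0r mulf_eq0 !(addr_eq0_pchar2 F2).
  have [<-|//] := eqVneq u v; rewrite -expr2 (addrr_pchar2 F2) add0r (sqrf_eq1_pchar2 F2).
  by apply: contraTF u_root => /eqP ->; rewrite /fc expr1n (addrr_pchar2 F2) add0r.
rewrite cardsD (setIidPr diag_sub) cardsX card_diag.
by rewrite -subn1 mulnBr muln1.
Qed.

End RootPairs.

Section Residue.
Variables (R : comNzRingType) (F : fieldType) (red : {rmorphism R -> F}).
Hypothesis red_ker : forall X, red X = 0 <-> exists Y, X = Y *+ 2.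
Hypothesis R4 : 4%:R = 0 :> R.

Lemma residue_pchar2 : 2 \in [pchar F].
Proof. by rewrite inE /= -(rmorph_nat red); apply/eqP/red_ker; exists 1. Qed.

Lemma mulr4n_eq0 (X : R) : X *+ 4 = 0.
Proof. by rewrite -mulr_natr R4 mulr0. Qed.

Lemma red_eq_sqr (X Y : R) : red X = red Y -> X ^+ 2 = Y ^+ 2.
Proof.
move=> eXY; have /red_ker [Z EZ] : red (X - Y) = 0 by rewrite rmorphB eXY subrr.
have -> : X = Y + Z *+ 2 by rewrite -EZ addrC subrK.
have -> : (Y + Z *+ 2) ^+ 2 = Y ^+ 2 + (Y * Z + Z ^+ 2) *+ 4 by ring.
by rewrite mulr4n_eq0 addr0.
Qed.

Lemma mulr2n_red_eq0 (X : R) : red X = 0 -> X *+ 2 = 0.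
Proof. by move/red_ker => [Y ->]; rewrite -mulrnA mulr4n_eq0. Qed.

Hypothesis red_ann2 : forall W, W *+ 2 = 0 -> red W = 0.

Lemma sum_sqr_lift (X Y Z A B : R) :
  (X ^+ 2 + Y ^+ 2 + Z ^+ 2 == - A ^+ 2 + B *+ 2) =
  (red X + red Y + red Z == red A) &&
  (red X * red Y + red Y * red Z + red Z * red X == red A ^+ 2 + red B).
Proof.
have F2 := residue_pchar2.
set S := X + Y + Z; set E := X * Y + Y * Z + Z * X.
have -> : X ^+ 2 + Y ^+ 2 + Z ^+ 2 = S ^+ 2 - E *+ 2 by rewrite /S /E; ring.
have redS : red S = red X + red Y + red Z by rewrite !rmorphD.
have redE : red E = red X * red Y + red Y * red Z + red Z * red X.
  by rewrite !rmorphD !rmorphM.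
rewrite -redS -redE; apply/eqP/andP => [eq_lift|[/eqP eSA /eqP eEAB]].
  have eSA : red S = red A.
    apply/eqP; rewrite -(sqrf_eq_pchar2 F2) -!rmorphXn.
    have := congr1 red eq_lift; rewrite !(rmorphB, rmorphN, rmorphD, rmorphMn).
    by rewrite !(addrr_pchar2 F2) subr0 addr0 (oppr_pchar2 F2) => ->.
  have EAB2 : (E + (A ^+ 2 + B)) *+ 2 = 0.
    have -> : (E + (A ^+ 2 + B)) *+ 2 =
      (- A ^+ 2 + B *+ 2) - (S ^+ 2 - E *+ 2) + (S ^+ 2 - A ^+ 2) + (A ^+ 2) *+ 4 by ring.
    by rewrite -eq_lift subrr (red_eq_sqr eSA) subrr !add0r mulr4n_eq0.
  split; first by rewrite eSA.
  by move: (red_ann2 EAB2); rewrite !rmorphD rmorphXn => /eqP; rewrite (addr_eq0_pchar2 F2).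
have EAB2 : (E + (A ^+ 2 + B)) *+ 2 = 0.
  by apply: mulr2n_red_eq0; rewrite rmorphD eEAB rmorphD rmorphXn (addrr_pchar2 F2).
rewrite (red_eq_sqr eSA).
have -> : A ^+ 2 - E *+ 2 =
  - A ^+ 2 + B *+ 2 + (E + (A ^+ 2 + B)) *+ 2 - (E + B) *+ 4 by ring.
by rewrite EAB2 mulr4n_eq0 addr0 subr0.
Qed.

End Residue.

Lemma z4_mulr2n_eq0 (c : 'Z_4) : c *+ 2 = 0 -> z4_to_f2 c = 0.
Proof. by case: c => -[|[|[|[|//]]]] ? /eqP //= _; apply/val_inj. Qed.

Lemma map_z4_to_f2_eq0 (p : {poly 'Z_4}) :
  map_poly z4_to_f2 p = 0 -> exists q, p = q *+ 2.
Proof.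
move=> p0; exists (\poly_(i < size p) ((p`_i)%R./2)%:R); apply/polyP => i.
rewrite coefMn coef_poly; case: ltnP => [_|le]; last by rewrite mul0rn nth_default.
by apply: z4_to_f2_eq0; rewrite -coef_map p0 coef0.
Qed.

Section Presentation.
Variables (f : {poly 'Z_4}) (R : comNzRingType) (phi : {rmorphism {poly 'Z_4} -> R}).
Hypothesis f_monic : f \is monic.
Hypothesis phi_surj : forall X : R, exists p, phi p = X.
Hypothesis phi_ker : forall p, phi p = 0 <-> exists g, p = g * f.

Lemma phi_f : phi f = 0.
Proof. by apply/phi_ker; exists 1; rewrite mul1r. Qed.

Lemma presentation_char4 : 4%:R = 0 :> R.
Proof.
have Z4_4 : 4%:R = 0 :> 'Z_4 by apply/val_inj.
by rewrite -(rmorph_nat phi) -polyC_natr Z4_4 polyC0 rmorph0.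
Qed.

Lemma presentation_ann2 (W : R) : W *+ 2 = 0 -> exists V, W = V *+ 2.
Proof.
move=> W2; have [p Ep] := phi_surj W; rewrite -Ep in W2 *.
have /phi_ker [g p2_eq] : phi (p *+ 2) = 0 by rewrite rmorphMn.
have [g' Eg] : exists g', g = g' *+ 2.
  apply: map_z4_to_f2_eq0; apply/eqP.
  have : map_poly z4_to_f2 g * map_poly z4_to_f2 f = 0.
    have F2_2 : 2%:R = 0 :> 'F_2 by apply/val_inj.
    by rewrite -rmorphM -p2_eq rmorphMn -mulr_natr -polyC_natr F2_2 polyC0 mulr0.
  by move/eqP; rewrite mulf_eq0 (negbTE (monic_neq0 (monic_map _ f_monic))) orbF.
have [q Eq] : exists q, p - g' * f = q *+ 2.
  apply: map_z4_to_f2_eq0; apply/polyP => i; rewrite coef_map coef0; apply: z4_mulr2n_eq0.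
  by rewrite -coefMn mulrnBl -mulrnAl -Eg -p2_eq subrr coef0.
by exists (phi q); rewrite -rmorphMn -Eq rmorphB rmorphM phi_f mulr0 subr0.
Qed.

Variables (m : nat) (F : finFieldType) (red : {rmorphism R -> F}).
Hypothesis f_size : size f = m.+1.
Hypothesis red_surj : forall x : F, exists X, red X = x.
Hypothesis red_ker : forall X, red X = 0 <-> exists Y, X = Y *+ 2.

Lemma card_residue_le : (#|F| <= 2 ^ m)%N.
Proof.
have F2 := pcharf0 (residue_pchar2 red_ker).
set xi := red (phi 'X).
pose Phi (b : {ffun 'I_m -> bool}) : F := \sum_(i < m) (b i)%:R * xi ^+ i.
have red_phiC (c : 'Z_4) : red (phi c%:P) = (odd c)%:R.
  rewrite -{1}(natr_Zp c) polyC_natr !rmorph_nat -{1}(odd_double_half c).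
  by rewrite natrD -muln2 natrM F2 mulr0 addr0.
suff /subset_leq_card : [set: F] \subset [set Phi b | b in [set: {ffun 'I_m -> bool}]].
  rewrite cardsT => /leq_trans; apply; apply: leq_trans (leq_imset_card _ _) _.
  by rewrite cardsT card_ffun card_bool card_ord.
apply/subsetP => x _; have [X <-] := red_surj x; have [p <-] := phi_surj X.
set r := Pdiv.CommonRing.rmodp p f.
have phi_r : phi p = phi r.
  by rewrite {1}(Pdiv.RingMonic.rdivp_eq f_monic p) rmorphD rmorphM phi_f mulr0 add0r.
have r_size : (size r <= m)%N.
  by rewrite -ltnS -f_size Pdiv.CommonRing.ltn_rmodpN0 ?monic_neq0.
have Er : r = \poly_(i < m) r`_i.
  apply/polyP => i; rewrite coef_poly; case: ltnP => // le.
  by rewrite nth_default // (leq_trans r_size le).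
apply/imsetP; exists [ffun i : 'I_m => odd (r`_i)%R]; first by rewrite inE.
rewrite phi_r {1}Er poly_def !rmorph_sum; apply: eq_bigr => i _.
by rewrite ffunE -mul_polyC !rmorphM !rmorphXn red_phiC.
Qed.

End Presentation.

Lemma odd_exp2_pred (m : nat) : (0 < m)%N -> odd (2 ^ m).-1.
Proof.
move=> m_gt0; have := oddX 2 m; rewrite -(prednK (expn_gt0 2 m)) /=.
by rewrite orbF (negbTE (lt0n_neq0 m_gt0)) => /negbFE.
Qed.

Section Teichmuller.
Variables (m : nat) (R : finComNzRingType) (F : finFieldType) (red : {rmorphism R -> F}).
Hypothesis m_gt0 : (0 < m)%N.
Hypothesis red_ker : forall X, red X = 0 <-> exists Y, X = Y *+ 2.
Hypothesis R4 : 4%:R = 0 :> R.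
Variable beta : R.
Hypothesis beta_prim : (2 ^ m).-1.-primitive_root beta.

Let n := (2 ^ m).-1.

Let n_gt0 : (0 < n)%N.
Proof. by rewrite -ltnS prednK ?expn_gt0 // -{1}(expn0 2) ltn_exp2l. Qed.

Lemma red_prim_root : n.-primitive_root (red beta).
Proof.
have red_beta_n : red beta ^+ n = 1 by rewrite -rmorphXn prim_expr_order // rmorph1.
have [k red_k k_dvd_n] := prim_order_exists n_gt0 red_beta_n.
suff -> : n = k by [].
apply/eqP; rewrite eqn_dvd k_dvd_n andbT.
have : beta ^+ (k * 2) == 1.
  rewrite exprM (red_eq_sqr red_ker R4 (Y := 1)) ?expr1n //.
  by rewrite rmorphXn (prim_expr_order red_k) rmorph1.
by rewrite -(prim_order_dvd beta_prim) Gauss_dvdl ?coprimen2 ?odd_exp2_pred.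
Qed.

Lemma red_beta_neq0 : red beta != 0.
Proof.
apply: contra_eq_neq (prim_expr_order red_prim_root) => ->.
by rewrite expr0n eqn0Ngt n_gt0 eq_sym oner_eq0.
Qed.

Definition teich_elt (o : option 'I_n) : R := if o is Some i then beta ^+ i else 0.

Lemma teichP (X : R) :
  reflect (exists o, X = teich_elt o) (X \in teich (2 ^ m) beta).
Proof.
apply: (iffP orP) => [[/eqP ->|/existsP [i /eqP ->]]|[[i|] ->]].
- by exists None.
- by exists (Some i).
- by right; apply/existsP; exists i.
- by left.
Qed.

Lemma red_teich_elt_inj : injective (red \o teich_elt).
Proof.
have rb0 := red_beta_neq0.
move=> [i|] [j|] //=; rewrite ?rmorphXn ?rmorph0 => /eqP.
- rewrite (eq_prim_root_expr red_prim_root) !modn_small // => /eqP ij.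
  by congr Some; apply/val_inj.
- by rewrite expf_eq0 (negbTE rb0) andbF.
- by rewrite eq_sym expf_eq0 (negbTE rb0) andbF.
Qed.

Lemma teich_red_inj : {in teich (2 ^ m) beta &, injective red}.
Proof.
move=> _ _ /teichP [o ->] /teichP [o' ->] e.
by congr teich_elt; apply: red_teich_elt_inj.
Qed.

Lemma teich_red_onto (x : F) : (#|F| <= 2 ^ m)%N ->
  exists2 X, X \in teich (2 ^ m) beta & red X = x.
Proof.
move=> F_le; have /codomP [o ->] : x \in codom (red \o teich_elt).
  by apply: inj_card_onto red_teich_elt_inj _ _; rewrite card_option card_ord prednK ?expn_gt0.
by exists (teich_elt o) => //; apply/teichP; exists o.
Qed.

Lemma teich_exp2 (X : R) : X \in teich (2 ^ m) beta -> X ^+ (2 ^ m) = X.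
Proof.
case/teichP => -[i|] -> /=; last by rewrite expr0n eqn0Ngt expn_gt0.
rewrite -exprM mulnC exprM -(prednK (expn_gt0 2 m)) exprS.
by rewrite (prim_expr_order beta_prim) mulr1.
Qed.

Lemma teich_sqrt (X : R) : X \in teich (2 ^ m) beta -> (X ^+ (2 ^ m.-1)) ^+ 2 = X.
Proof. by move=> X_teich; rewrite -exprM muln2 -mul2n -expnS prednK // teich_exp2. Qed.

Hypothesis red_ann2 : forall W, W *+ 2 = 0 -> red W = 0.

Lemma teich_sum_lift (X Y Z A B : R) :
  X \in teich (2 ^ m) beta -> Y \in teich (2 ^ m) beta ->
  Z \in teich (2 ^ m) beta -> A \in teich (2 ^ m) beta ->
  (X + Y + Z == - A + B *+ 2) =
  (red X + red Y + red Z == red A) &&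
  (red X * red Y + red Y * red Z + red Z * red X == red A ^+ 2 + red B ^+ 2).
Proof.
move=> X_teich Y_teich Z_teich A_teich; have F2 := residue_pchar2 red_ker.
rewrite -{1}(teich_sqrt X_teich) -{1}(teich_sqrt Y_teich) -{1}(teich_sqrt Z_teich).
rewrite -{1}(teich_sqrt A_teich) (sum_sqr_lift red_ker R4 red_ann2).
rewrite -[in red X](teich_sqrt X_teich) -[in red Y](teich_sqrt Y_teich).
rewrite -[in red Z](teich_sqrt Z_teich) -[in red A](teich_sqrt A_teich) !rmorphXn.
by rewrite -!exprMn -!(sqrrD_pchar2 F2) !(sqrf_eq_pchar2 F2).
Qed.

Lemma card_teich_triples (A B : R) (d : F) :
  (#|F| <= 2 ^ m)%N -> A \in teich (2 ^ m) beta ->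
  #|[set t : R * R * R |
     [&& t.1.1 \in teich (2 ^ m) beta, t.1.2 \in teich (2 ^ m) beta,
         t.2 \in teich (2 ^ m) beta, t.1.1 + t.1.2 + t.2 == - A + B *+ 2 &
         red t.1.1 ^+ 3 + red t.1.2 ^+ 3 + red t.2 ^+ 3 == red A ^+ 3 + red B ^+ 3 * d]]|
  = #|sym_system (red A) (red B) d|.
Proof.
move=> F_le A_teich; pose red3 (t : R * R * R) := (red t.1.1, red t.1.2, red t.2).
rewrite -(card_in_imset (f := red3)); last first.
  move=> [[X Y] Z] [[X' Y'] Z']; rewrite !inE /=.
  move=> /and5P [X_t Y_t Z_t _ _] /and5P [X'_t Y'_t Z'_t _ _] [eX eY eZ].
  by rewrite (teich_red_inj X_t X'_t eX) (teich_red_inj Y_t Y'_t eY) (teich_red_inj Z_t Z'_t eZ).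
apply: eq_card => -[[x y] z]; apply/imsetP/idP => [[[[X Y] Z]]|].
  rewrite inE /= => /and5P [X_t Y_t Z_t sum_eq cube_eq] [-> -> ->].
  by move: sum_eq; rewrite teich_sum_lift // inE /= cube_eq andbT.
have [X X_t <-] := teich_red_onto x F_le.
have [Y Y_t <-] := teich_red_onto y F_le.
have [Z Z_t <-] := teich_red_onto z F_le.
rewrite inE /= => /and3P [sum_eq sym2_eq cube_eq].
by exists (X, Y, Z); rewrite // inE /= X_t Y_t Z_t teich_sum_lift // sum_eq sym2_eq cube_eq.
Qed.

End Teichmuller.

Theorem lemmaB8
  (m : nat) (hm : odd m)
  (f : {poly 'Z_4}) (hfmonic : f \is monic) (hfsize : size f = m.+1)
  (hfirr : irreducible_poly (map_poly z4_to_f2 f))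
  (R : finComNzRingType)
  (phi : {rmorphism {poly 'Z_4} -> R})
  (phi_surj : forall X : R, exists p, phi p = X)
  (phi_ker : forall p, phi p = 0 <-> exists g, p = g * f)
  (F : finFieldType)
  (red : {rmorphism R -> F})
  (red_surj : forall x : F, exists X, red X = x)
  (red_ker : forall X, red X = 0 <-> exists Y, X = Y *+ 2)
  (beta : R) (hbeta : (2 ^ m).-1.-primitive_root beta)
  (A B : R) (hA : A \in teich (2 ^ m) beta) (hB : B \in teich (2 ^ m) beta)
  (hB0 : B != 0) (d : F) :
  let N := #|[set t : R * R * R |
               [&& t.1.1 \in teich (2 ^ m) beta,
                   t.1.2 \in teich (2 ^ m) beta,
                   t.2 \in teich (2 ^ m) beta,
                   t.1.1 + t.1.2 + t.2 == - A + B *+ 2 &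
                   red t.1.1 ^+ 3 + red t.1.2 ^+ 3 + red t.2 ^+ 3
                     == red A ^+ 3 + red B ^+ 3 * d]]| in
  (d = 0 -> N = 3%N) /\
  (d \in Mset F 0 :|: Mset F 1 -> N = 0%N) /\
  (d \in Mset F 3 -> N = 6%N).
Proof.
move=> N.
have m_gt0 : (0 < m)%N by rewrite lt0n; apply: contraTneq hm => ->.
have R4 := presentation_char4 phi.
have red_ann2 W : W *+ 2 = 0 -> red W = 0.
  by move/(presentation_ann2 hfmonic phi_surj phi_ker)/red_ker.
have F_le := card_residue_le hfmonic phi_surj phi_ker hfsize red_surj red_ker.
have F2 := residue_pchar2 red_ker.
have redB0 : red B != 0.
  apply: contra hB0 => /eqP redB0; apply/eqP/(teich_red_inj m_gt0 red_ker R4 hbeta) => //.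
  - by apply/orP; left.
  - by rewrite redB0 rmorph0.
rewrite /N (card_teich_triples m_gt0 red_ker R4 hbeta red_ann2) // (card_sym_system F2) //.
have card_Mset i : d \in Mset F i -> #|root_pairs d| = (i * i.-1)%N.
  by rewrite inE => /andP [d0 /eqP roots_d]; rewrite (card_root_pairs F2) // roots_d.
split; first by move->; rewrite (card_root_pairs0 F2).
by split=> [/setUP [] /card_Mset|/card_Mset].
Qed.
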